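(* Let $C$ be a set and $\mathsf{D}$ a category. (i) Suppose given an object $F_{\mathrm{nil}}\in\mathsf{D}$, for every $c\in C$ an endofunctor $\gamma_c:\mathsf{D}\to\mathsf{D}$, and for all $a,b\in C$ a natural isomorphism $\tau_{a,b}:\gamma_a\gamma_b\xrightarrow{\sim}\gamma_b\gamma_a$, such that $\tau_{a,b}\tau_{b,a}=\mathrm{Id}$ for all $a,b$, and such that for all $a,b,c\in C$ the two composites $\gamma_a\gamma_b\gamma_c\to\gamma_c\gamma_b\gamma_a$ given by $(\tau_{b,c}\cdot\gamma_a)\circ(\gamma_b\cdot\tau_{a,c})\circ(\tau_{a,b}\cdot\gamma_c)$ and $(\gamma_c\cdot\tau_{a,b})\circ(\tau_{a,c}\cdot\gamma_b)\circ(\gamma_a\cdot\tau_{b,c})$ are equal. Then there is a functor $F:\mathrm{SList}(C)\to\mathsf{D}$ equipped with isomorphisms $\upsilon_{\mathrm{nil}}:F([\,])\simeq F_{\mathrm{nil}}$ and, for each $c\in C$, natural isomorphisms $\upsilon_{\mathrm{cons},c}:F\circ(c::-)\simeq\gamma_c\circ F$, such that $F(\mathrm{sw}_{a,b,l})$ is identified with $(\tau_{a,b})_{F(l)}$ through these isomorphisms. (ii) Let $F,G:\mathrm{SList}(C)\to\mathsf{D}$ be functors. Suppose given a morphism $\phi_{\mathrm{nil}}:F([\,])\to G([\,])$ and, for every $c\in C$, $l\in\mathrm{SList}(C)$ and morphism $\mathrm{ind}:F(l)\to G(l)$, a morphism $\phi_{c,l}(\mathrm{ind}):F(c::l)\to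 G(c::l)$, such that: for all $a,b\in C$, $l$, and $\mathrm{ind}:F(l)\to G(l)$, one has $G(\mathrm{sw}_{a,b,l})\circ\phi_{a,b::l}(\phi_{b,l}(\mathrm{ind}))=\phi_{b,a::l}(\phi_{a,l}(\mathrm{ind}))\circ F(\mathrm{sw}_{a,b,l})$; and for all $c\in C$, morphisms $f:l\to l'$ in $\mathrm{SList}(C)$ and morphisms $\mathrm{ind}_l:F(l)\to G(l)$, $\mathrm{ind}_{l'}:F(l')\to G(l')$ with $\mathrm{ind}_{l'}\circ F(f)=G(f)\circ\mathrm{ind}_l$, one has $\phi_{c,l'}(\mathrm{ind}_{l'})\circ F(c::_mf)=G(c::_mf)\circ\phi_{c,l}(\mathrm{ind}_l)$. Then there is a unique natural transformation $\phi:F\to G$ such that $\phi_{[\,]}=\phi_{\mathrm{nil}}$ and $\phi_{c::l}=\phi_{c,l}(\phi_l)$ for all $c,l$.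
   Context: For a set $C$, the category of symmetric lists $\mathrm{SList}(C)$ is the category presented by generators and relations as follows. Objects are finite lists of elements of $C$ (with $[\,]$ the empty list and $c::l$ the list with head $c$ and tail $l$). Morphisms are generated by: for all $a,b\in C$ and lists $l$, a morphism $\mathrm{sw}_{a,b,l}:a::b::l\to b::a::l$; and for every morphism $f:l\to l'$ and $x\in C$, a morphism $x::_mf:x::l\to x::l'$. Relations: $f\mapsto x::_mf$ respects composition and identities (so $x::-$ is a functor); $\mathrm{sw}_{a,b,l}$ is natural in $l$; $\mathrm{sw}_{b,a,l}\circ\mathrm{sw}_{a,b,l}=\mathrm{Id}_{a::b::l}$; and for all $a,b,c,l$, $\mathrm{sw}_{b,c,a::l}\circ(b::_m\mathrm{sw}_{a,c,l})\circ\mathrm{sw}_{a,b,c::l}=(c::_m\mathrm{sw}_{a,b,l})\circ\mathrm{sw}_{a,c,b::l}\circ(a::_m\mathrm{sw}_{b,c,l})$. In (i), $\gamma_b\cdot\tau$ and $\tau\cdot\gamma_c$ denote whiskerings. *)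

From Stdlib Require Import List Setoid Morphisms RelationClasses.
Import ListNotations.

Set Implicit Arguments.
Unset Strict Implicit.
Set Universe Polymorphism.

(* A category whose hom-sets are setoids (for an ordinary category take heq := eq). *)
Record Category := {
  Ob :> Type;
  Hom : Ob -> Ob -> Type;
  heq : forall a b, Hom a b -> Hom a b -> Prop;
  heq_equiv : forall a b, Equivalence (@heq a b);
  idm : forall a, Hom a a;
  comp : forall a b c, Hom b c -> Hom a b -> Hom a c;
  comp_proper : forall a b c (f f' : Hom b c) (g g' : Hom a b),
      heq f f' -> heq g g' -> heq (comp f g) (comp f' g');
  comp_id_l : forall a b (f : Hom a b), heq (comp (idm b) f) f;
  comp_id_r : forall a b (f : Hom a b), heq (comp f (idm a)) f;
  comp_assoc : forall a b c d (f : Hom c d) (g : Hom b c) (h : Hom a b),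
      heq (comp f (comp g h)) (comp (comp f g) h)
}.

Arguments Hom {c} _ _ : rename.
Arguments heq {c a b} _ _ : rename.
Arguments idm {c} a : rename.
Arguments comp {c a b c0} _ _ : rename.

Notation "f ∘ g" := (comp f g) (at level 40, left associativity).
Notation "f ≈ g" := (heq f g) (at level 70, no associativity).

Record Functor (C D : Category) := {
  fobj :> Ob C -> Ob D;
  fmap : forall a b, @Hom C a b -> @Hom D (fobj a) (fobj b);
  fmap_proper : forall a b (f g : @Hom C a b), f ≈ g -> fmap f ≈ fmap g;
  fmap_id : forall a, fmap (idm a) ≈ idm (fobj a);
  fmap_comp : forall a b c (f : @Hom C b c) (g : @Hom C a b),
      fmap (f ∘ g) ≈ fmap f ∘ fmap g
}.

Arguments fmap {C D} F {a b} _ : rename.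

Record NatTrans (C D : Category) (F G : Functor C D) := {
  ntc :> forall a : Ob C, @Hom D (F a) (G a);
  ntc_nat : forall a b (f : @Hom C a b), ntc b ∘ fmap F f ≈ fmap G f ∘ ntc a
}.

Record Iso (D : Category) (x y : Ob D) := {
  iso_hom :> @Hom D x y;
  iso_inv : @Hom D y x;
  iso_inv_l : iso_inv ∘ iso_hom ≈ idm x;
  iso_inv_r : iso_hom ∘ iso_inv ≈ idm y
}.

Section SList.
Variable C : Type.

Inductive SHom : list C -> list C -> Type :=
| sh_id : forall l, SHom l l
| sh_comp : forall l1 l2 l3, SHom l2 l3 -> SHom l1 l2 -> SHom l1 l3
| sh_sw : forall (a b : C) l, SHom (a :: b :: l) (b :: a :: l)
| sh_cons : forall (x : C) l l', SHom l l' -> SHom (x :: l) (x :: l').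

Inductive SEq : forall l l', SHom l l' -> SHom l l' -> Prop :=
| se_refl : forall l l' (f : SHom l l'), SEq f f
| se_sym : forall l l' (f g : SHom l l'), SEq f g -> SEq g f
| se_trans : forall l l' (f g h : SHom l l'), SEq f g -> SEq g h -> SEq f h
| se_comp : forall l1 l2 l3 (f f' : SHom l2 l3) (g g' : SHom l1 l2),
    SEq f f' -> SEq g g' -> SEq (sh_comp f g) (sh_comp f' g')
| se_cons : forall x l l' (f f' : SHom l l'),
    SEq f f' -> SEq (sh_cons x f) (sh_cons x f')
| se_id_l : forall l l' (f : SHom l l'), SEq (sh_comp (sh_id l') f) f
| se_id_r : forall l l' (f : SHom l l'), SEq (sh_comp f (sh_id l)) f
| se_assoc : forall l1 l2 l3 l4 (f : SHom l3 l4) (g : SHom l2 l3) (h : SHom l1 l2),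
    SEq (sh_comp f (sh_comp g h)) (sh_comp (sh_comp f g) h)
| se_cons_id : forall x l, SEq (sh_cons x (sh_id l)) (sh_id (x :: l))
| se_cons_comp : forall x l1 l2 l3 (f : SHom l2 l3) (g : SHom l1 l2),
    SEq (sh_cons x (sh_comp f g)) (sh_comp (sh_cons x f) (sh_cons x g))
| se_sw_nat : forall a b l l' (f : SHom l l'),
    SEq (sh_comp (sh_sw a b l') (sh_cons a (sh_cons b f)))
        (sh_comp (sh_cons b (sh_cons a f)) (sh_sw a b l))
| se_sw_inv : forall a b l,
    SEq (sh_comp (sh_sw b a l) (sh_sw a b l)) (sh_id (a :: b :: l))
| se_braid : forall a b c l,
    SEq (sh_comp (sh_sw b c (a :: l)) (sh_comp (sh_cons b (sh_sw a c l)) (sh_sw a b (c :: l))))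
        (sh_comp (sh_cons c (sh_sw a b l)) (sh_comp (sh_sw a c (b :: l)) (sh_cons a (sh_sw b c l)))).

Lemma SEq_equiv l l' : Equivalence (@SEq l l').
Proof.
  split; [intros f; apply se_refl | intros f g; apply se_sym
         | intros f g h; apply se_trans].
Qed.

Definition SList : Category :=
  {| Ob := list C;
     Hom := SHom;
     heq := SEq;
     heq_equiv := SEq_equiv;
     idm := sh_id;
     comp := sh_comp;
     comp_proper := se_comp;
     comp_id_l := se_id_l;
     comp_id_r := se_id_r;
     comp_assoc := se_assoc |}.

End SList.

Arguments sh_sw {C} a b l.
Arguments sh_cons {C} x {l l'} _.

(* SList(C) is presented by generators and relations, so a functor out of it
   is obtained by sending [sw_{a,b,l}] to [tau_{a,b}] and [x ::_m -] to
   [gamma_x] and checking that every defining relation holds in D; these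
   checks are exactly the naturality, involutivity and braid hypotheses on
   [tau].  Since the interpretation is strict, all the isomorphisms of (i) are
   identities.  For (ii), the components are defined by recursion on the list;
   naturality is checked on generators by induction on the formal morphism, and
   uniqueness is an induction on the list, using that [phi c l] respects [≈]
   (the compatibility hypothesis applied to identity morphisms). *)
From Stdlib Require Import List Setoid Morphisms RelationClasses.
Import ListNotations.

#[global] Existing Instance heq_equiv.

#[global] Instance comp_Proper (D : Category) (a b c : Ob D) :
  Proper (@heq D b c ==> @heq D a b ==> @heq D a c) (@comp D a b c).
Proof. intros f f' Hf g g' Hg; exact (comp_proper Hf Hg). Qed.

#[global] Instance fmap_Proper (A B : Category) (F : Functor A B) (a b : Ob A) :
  Proper (@heq A a b ==> @heq B (F a) (F b)) (@fmap A B F a b).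
Proof. intros f g H; exact (fmap_proper F H). Qed.

Definition iso_refl {D : Category} (x : Ob D) : Iso x x :=
  {| iso_hom := idm x; iso_inv := idm x;
     iso_inv_l := comp_id_l (idm x); iso_inv_r := comp_id_l (idm x) |}.

Section SListInterpretation.
Context {C : Type} {D : Category} (Fnil : Ob D) {gamma : C -> Functor D D}
  {tau : forall (a b : C) (X : Ob D), @Hom D (gamma a (gamma b X)) (gamma b (gamma a X))}.
Hypothesis tau_nat : forall a b (X Y : Ob D) (f : @Hom D X Y),
  tau a b Y ∘ fmap (gamma a) (fmap (gamma b) f)
  ≈ fmap (gamma b) (fmap (gamma a) f) ∘ tau a b X.
Hypothesis tau_inv : forall a b (X : Ob D), tau a b X ∘ tau b a X ≈ idm (gamma b (gamma a X)).
Hypothesis tau_braid : forall a b c (X : Ob D),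
  tau b c (gamma a X) ∘ fmap (gamma b) (tau a c X) ∘ tau a b (gamma c X)
  ≈ fmap (gamma c) (tau a b X) ∘ tau a c (gamma b X) ∘ fmap (gamma a) (tau b c X).

Fixpoint interp_obj (l : list C) : Ob D :=
  match l with
  | [] => Fnil
  | c :: l => gamma c (interp_obj l)
  end.

Fixpoint interp_hom {l l'} (f : SHom l l') : @Hom D (interp_obj l) (interp_obj l') :=
  match f in SHom l l' return @Hom D (interp_obj l) (interp_obj l') with
  | sh_id l => idm (interp_obj l)
  | sh_comp f g => interp_hom f ∘ interp_hom g
  | sh_sw a b l => tau a b (interp_obj l)
  | sh_cons x f => fmap (gamma x) (interp_hom f)
  end.

Lemma interp_hom_proper l l' (f g : SHom l l') : SEq f g -> interp_hom f ≈ interp_hom g.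
Proof.
  induction 1; simpl.
  - reflexivity.
  - symmetry; assumption.
  - etransitivity; eassumption.
  - apply comp_proper; assumption.
  - apply fmap_proper; assumption.
  - apply comp_id_l.
  - apply comp_id_r.
  - apply comp_assoc.
  - apply fmap_id.
  - apply fmap_comp.
  - apply tau_nat.
  - apply tau_inv.
  - rewrite !comp_assoc; apply tau_braid.
Qed.

Definition interp_functor : Functor (SList C) D :=
  @Build_Functor (SList C) D interp_obj (@interp_hom) interp_hom_proper
    (fun l => reflexivity (idm (interp_obj l)))
    (fun l1 l2 l3 f g => reflexivity (interp_hom f ∘ interp_hom g)).

End SListInterpretation.

Lemma fmap_cons_id {C : Type} {D : Category} (K : Functor (SList C) D) c l :
  fmap K (sh_cons c (sh_id l)) ≈ idm (K (c :: l)).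
Proof. rewrite <- fmap_id; apply fmap_proper, se_cons_id. Qed.

Section SListNatTrans.
Context {C : Type} {D : Category} {F G : Functor (SList C) D}
  (phi_nil : @Hom D (F []) (G []))
  {phi : forall (c : C) (l : list C), @Hom D (F l) (G l) -> @Hom D (F (c :: l)) (G (c :: l))}.
Hypothesis phi_sw : forall (a b : C) (l : list C) (ind : @Hom D (F l) (G l)),
  fmap G (sh_sw a b l) ∘ phi a (b :: l) (phi b l ind)
  ≈ phi b (a :: l) (phi a l ind) ∘ fmap F (sh_sw a b l).
Hypothesis phi_cons : forall (c : C) (l l' : list C) (f : @Hom (SList C) l l')
  (ind_l : @Hom D (F l) (G l)) (ind_l' : @Hom D (F l') (G l')),
  ind_l' ∘ fmap F f ≈ fmap G f ∘ ind_l ->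
  phi c l' ind_l' ∘ fmap F (sh_cons c f) ≈ fmap G (sh_cons c f) ∘ phi c l ind_l.

Fixpoint rec_component (l : list C) : @Hom D (F l) (G l) :=
  match l with
  | [] => phi_nil
  | c :: l => phi c l (rec_component l)
  end.

Lemma rec_component_natural l l' (f : SHom l l') :
  rec_component l' ∘ fmap F f ≈ fmap G f ∘ rec_component l.
Proof.
  induction f as [l | l1 l2 l3 f IHf g IHg | a b l | x l l' f IHf].
  - change (sh_id l) with (@idm (SList C) l).
    rewrite !fmap_id, comp_id_l, comp_id_r; reflexivity.
  - change (sh_comp f g) with (@comp (SList C) _ _ _ f g).
    rewrite !fmap_comp, comp_assoc, IHf, <- comp_assoc, IHg, comp_assoc; reflexivity.
  - symmetry; apply phi_sw.
  - apply phi_cons, IHf.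
Qed.

Definition rec_nat_trans : NatTrans F G :=
  @Build_NatTrans (SList C) D F G rec_component rec_component_natural.

Lemma phi_proper c l (x y : @Hom D (F l) (G l)) : x ≈ y -> phi c l x ≈ phi c l y.
Proof.
  intro Hxy.
  assert (Hsq : y ∘ fmap F (@idm (SList C) l) ≈ fmap G (@idm (SList C) l) ∘ x)
    by (rewrite !fmap_id, comp_id_l, comp_id_r; symmetry; exact Hxy).
  pose proof (phi_cons c _ _ _ _ _ Hsq) as Hc.
  rewrite !fmap_cons_id, comp_id_l, comp_id_r in Hc.
  symmetry; exact Hc.
Qed.

Lemma rec_component_unique {eta : forall l, @Hom D (F l) (G l)} :
  eta [] ≈ phi_nil -> (forall c l, eta (c :: l) ≈ phi c l (eta l)) ->
  forall l, eta l ≈ rec_component l.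
Proof.
  intros eta_nil eta_cons l; induction l as [|c l IHl]; simpl.
  - exact eta_nil.
  - rewrite eta_cons; apply phi_proper, IHl.
Qed.

End SListNatTrans.

Theorem lemma2p3 (C : Type) (D : Category) :
  (* (i) *)
  (forall (Fnil : Ob D) (gamma : C -> Functor D D)
          (tau : forall (a b : C) (X : Ob D),
                   @Hom D (gamma a (gamma b X)) (gamma b (gamma a X))),
     (* tau_{a,b} is natural *)
     (forall a b (X Y : Ob D) (f : @Hom D X Y),
        tau a b Y ∘ fmap (gamma a) (fmap (gamma b) f)
        ≈ fmap (gamma b) (fmap (gamma a) f) ∘ tau a b X) ->
     (* tau_{a,b} tau_{b,a} = Id *)
     (forall a b (X : Ob D), tau a b X ∘ tau b a X ≈ idm (gamma b (gamma a X))) ->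
     (* hexagon / braid relation *)
     (forall a b c (X : Ob D),
        tau b c (gamma a X) ∘ fmap (gamma b) (tau a c X) ∘ tau a b (gamma c X)
        ≈ fmap (gamma c) (tau a b X) ∘ tau a c (gamma b X) ∘ fmap (gamma a) (tau b c X)) ->
     exists (F : Functor (SList C) D)
            (ups_nil : Iso (F []) Fnil)
            (ups_cons : forall (c : C) (l : list C), Iso (F (c :: l)) (gamma c (F l))),
       (* naturality of ups_cons c *)
       (forall (c : C) (l l' : list C) (f : @Hom (SList C) l l'),
          iso_hom (ups_cons c l') ∘ fmap F (sh_cons c f)
          ≈ fmap (gamma c) (fmap F f) ∘ iso_hom (ups_cons c l)) /\
       (* F(sw_{a,b,l}) corresponds to tau_{a,b,F(l)} *)
       (forall (a b : C) (l : list C),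
          fmap (gamma b) (iso_hom (ups_cons a l)) ∘ iso_hom (ups_cons b (a :: l))
            ∘ fmap F (sh_sw a b l)
          ≈ tau a b (F l)
            ∘ (fmap (gamma a) (iso_hom (ups_cons b l)) ∘ iso_hom (ups_cons a (b :: l))))) /\
  (* (ii) *)
  (forall (F G : Functor (SList C) D)
          (phi_nil : @Hom D (F []) (G []))
          (phi : forall (c : C) (l : list C),
                   @Hom D (F l) (G l) -> @Hom D (F (c :: l)) (G (c :: l))),
     (forall (a b : C) (l : list C) (ind : @Hom D (F l) (G l)),
        fmap G (sh_sw a b l) ∘ phi a (b :: l) (phi b l ind)
        ≈ phi b (a :: l) (phi a l ind) ∘ fmap F (sh_sw a b l)) ->
     (forall (c : C) (l l' : list C) (f : @Hom (SList C) l l')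
             (ind_l : @Hom D (F l) (G l)) (ind_l' : @Hom D (F l') (G l')),
        ind_l' ∘ fmap F f ≈ fmap G f ∘ ind_l ->
        phi c l' ind_l' ∘ fmap F (sh_cons c f) ≈ fmap G (sh_cons c f) ∘ phi c l ind_l) ->
     exists eta : NatTrans F G,
       (eta [] ≈ phi_nil /\ forall c l, eta (c :: l) ≈ phi c l (eta l)) /\
       (forall eta' : NatTrans F G,
          (eta' [] ≈ phi_nil /\ forall c l, eta' (c :: l) ≈ phi c l (eta' l)) ->
          forall l, eta' l ≈ eta l)).
Proof.
  split.
  - intros Fnil gamma tau tau_nat tau_inv tau_braid.
    exists (interp_functor Fnil tau_nat tau_inv tau_braid), (iso_refl Fnil),
      (fun c l => iso_refl _).
    split; simpl.
    + intros c l l' f; rewrite comp_id_l, comp_id_r; reflexivity.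
    + intros a b l; rewrite !fmap_id, !comp_id_l, comp_id_r; reflexivity.
  - intros F G phi_nil phi phi_sw phi_cons.
    exists (rec_nat_trans phi_nil phi_sw phi_cons).
    split.
    + split; intros; reflexivity.
    + intros eta [eta_nil eta_cons].
      exact (rec_component_unique phi_nil phi_cons eta_nil eta_cons).
Qed.
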